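(* Let $G$ be a vertex-transitive graph on $n \ge 3$ vertices whose automorphism group is abelian. Then $\frac{\lambda_3(G)}{n} \le \frac13$.
   Context: $\lambda_3(G)$ denotes the third largest eigenvalue (with multiplicity) of the adjacency matrix of $G$. *)

(* Eigenvalues are taken over algC (algebraic complex numbers),
   where the characteristic polynomial splits. *)
From mathcomp Require Import all_boot all_order all_algebra all_fingroup all_field.
Set Implicit Arguments. Unset Strict Implicit. Unset Printing Implicit Defensive.
Import Order.TTheory GRing.Theory Num.Theory.
Local Open Scope ring_scope.

Definition simple_graph (T : finType) (e : rel T) : Prop :=
  symmetric e /\ irreflexive e.

Definition adjmx (T : finType) (e : rel T) : 'M[algC]_#|T| :=
  \matrix_(i, j) (e (enum_val i) (enum_val j))%:R.

Definition eigenvalues (n : nat) (A : 'M[algC]_n) : seq algC :=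
  sort (fun x y : algC => y <= x)
       (sval (closed_field_poly_normal (char_poly A))).

(* k-th largest eigenvalue (1-indexed, with multiplicity). *)
Definition lambda_k (n : nat) (A : 'M[algC]_n) (k : nat) : algC :=
  nth 0 (eigenvalues A) k.-1.

Definition graph_aut (T : finType) (e : rel T) : {set {perm T}} :=
  [set s : {perm T} | [forall x, forall y, e (s x) (s y) == e x y]].

Definition vertex_transitive (T : finType) (e : rel T) : Prop :=
  forall x y : T, exists2 s, s \in graph_aut e & s x = y.

From mathcomp Require Import all_boot all_order all_algebra all_fingroup all_field all_character.
From mathcomp.algebra_tactics Require Import ring.
Set Implicit Arguments. Unset Strict Implicit. Unset Printing Implicit Defensive.
Import Order.TTheory GRing.Theory Num.Theory.
Local Open Scope ring_scope.

(* An abelian transitive automorphism group G acts regularly, so the graph is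
   a Cayley graph of G. Inversion of G is then an automorphism fixing a vertex,
   hence trivial: G is an elementary abelian 2-group and its irreducible
   characters take values +-1. Transported to the vertices, the characters form
   an orthogonal eigenbasis of the adjacency matrix, with eigenvalue
   lambda_chi = sum of chi over the connection set. For distinct nontrivial
   chi, psi we get 2 (lambda_chi + lambda_psi) <= n - 4, so apart from the
   trivial character at most one eigenvalue exceeds (n - 4) / 4, which
   bounds lambda_3. *)

Lemma char_poly_similar (F : fieldType) n (A D P : 'M[F]_n) :
  P \in unitmx -> A *m P = P *m D -> char_poly A = char_poly D.
Proof.
move=> P_unit AP_PD; pose PX := map_mx polyC P.
have PX_neq0 : \det PX != 0 by rewrite det_map_mx polyC_eq0 -unitfE -unitmxE.
have : char_poly_mx A *m PX = PX *m char_poly_mx D.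
  by rewrite mulmxBl mulmxBr -!map_mxM AP_PD scalar_mxC.
move/(congr1 determinant); rewrite !det_mulmx [RHS]mulrC.
exact: mulIf.
Qed.

Lemma char_poly_diag_similar (F : fieldType) n (A P : 'M[F]_n) (d : 'rV[F]_n) :
  P \in unitmx -> A *m P = P *m diag_mx d ->
  char_poly A = \prod_(k < n) ('X - (d 0 k)%:P).
Proof.
move=> P_unit /(char_poly_similar P_unit) ->.
rewrite char_poly_trig ?diag_mx_is_trig //.
by apply: eq_bigr => k _; rewrite !mxE eqxx.
Qed.

Lemma sorted_nth_le (R : numDomainType) (s : seq R) (c : R) k :
  all (fun x => x \is Num.real) s -> sorted (fun x y => y <= x) s -> 0 <= c ->
  (count (fun x => (c < x)%R) s <= k)%N -> nth 0 s k <= c.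
Proof.
move=> s_real s_sorted c_ge0 count_le.
have [k_lt|k_ge] := ltnP k (size s); last by rewrite nth_default.
have c_real : c \is Num.real by rewrite ger0_real.
have sk_real : nth 0 s k \is Num.real by apply: (all_nthP 0 s_real).
have ge_trans : transitive (fun x y : R => y <= x).
  by move=> y x z xy yz; apply: le_trans xy.
rewrite real_leNgt //; apply/negP => c_lt_sk.
have head_gt : all (fun x => c < x) (take k.+1 s).
  apply/(all_nthP 0) => i; rewrite size_take_min leq_min ltnS => /andP[i_le _].
  rewrite nth_take ?ltnS // (lt_le_trans c_lt_sk) //.
  apply: (sorted_leq_nth ge_trans lexx) => //; rewrite inE.
  exact: leq_ltn_trans k_lt.
move: count_le; rewrite -[s](cat_take_drop k.+1) count_cat.
move: head_gt; rewrite all_count => /eqP ->.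
by rewrite size_takel // addSn ltnNge leq_addr.
Qed.

Lemma lambda_k_le n (A : 'M[algC]_n) (s : seq algC) (c : algC) k :
  char_poly A = \prod_(x <- s) ('X - x%:P) -> all (fun x => x \is Num.real) s ->
  0 <= c -> (count (fun x => (c < x)%R) s <= k)%N -> lambda_k A k.+1 <= c.
Proof.
move=> pA s_real c_ge0 count_le; rewrite /lambda_k /eigenvalues /=.
case: closed_field_poly_normal => r /= pA_r.
have r_s : perm_eq r s.
  apply: prod_XsubC_eq; rewrite -pA pA_r.
  by rewrite (monicP (char_poly_monic A)) scale1r.
have sort_s := permEl (perm_sort (fun x y : algC => y <= x) r).
have sort_real : all (fun x => x \is Num.real) (sort (fun x y => y <= x) r).
  by rewrite (perm_all _ sort_s) (perm_all _ r_s).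
apply: sorted_nth_le => //.
- apply: (sort_sorted_in (P := fun x : algC => x \is Num.real)); last first.
    by rewrite (perm_all _ r_s).
  by move=> x y x_real y_real; rewrite orbC real_leVge.
- by rewrite (seq.permP sort_s) (seq.permP r_s).
Qed.

Lemma sign_pair_le (R : numDomainType) (b : bool) (x y : R) :
  x = 1 \/ x = -1 -> y = 1 \/ y = -1 -> b%:R * (2 * (x + y)) <= (1 + x) * (1 + y).
Proof.
case: b; rewrite ?mul1r ?mul0r => -[] -> [] ->;
  rewrite ?subrr ?addNr ?mulr0 ?mul0r -?opprD ?mulrN ?oppr_le0 //;
  by rewrite mulr_ge0 ?addr_ge0 ?ler01.
Qed.

Section GraphAutomorphisms.

Variables (T : finType) (e : rel T).

Lemma graph_autP (s : {perm T}) :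
  reflect (forall x y, e (s x) (s y) = e x y) (s \in graph_aut e).
Proof.
rewrite inE; apply: (iffP forallP) => [s_aut x y | s_aut x].
  by have /forallP/(_ y)/eqP := s_aut x.
by apply/forallP => y; rewrite s_aut.
Qed.

Lemma group_set_graph_aut : group_set (graph_aut e).
Proof.
apply/group_setP; split; first by apply/graph_autP => x y; rewrite !perm1.
move=> s t /graph_autP s_aut /graph_autP t_aut; apply/graph_autP => x y.
by rewrite !permM t_aut s_aut.
Qed.

Canonical graph_aut_group := Group group_set_graph_aut.

End GraphAutomorphisms.

Section RegularAction.

Variables (T : finType) (H : {group {perm T}}) (v0 : T).
Hypothesis H_trans : forall x, exists2 s, s \in H & s v0 = x.
Hypothesis H_abelian : abelian H.

Lemma abelian_trans_stab1 (s : {perm T}) : s \in H -> s v0 = v0 -> s = 1%g.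
Proof.
move=> sH s_v0; apply/permP => x; rewrite perm1.
have [h hH <-] := H_trans x.
by rewrite -permM -(centsP H_abelian s sH h hH) permM s_v0.
Qed.

Definition transl (x : T) : {perm T} := odflt 1%g [pick s in H | s v0 == x].

Lemma translP x : transl x \in H /\ transl x v0 = x.
Proof.
rewrite /transl; case: pickP => [s /andP[sH /eqP //]| no_s] /=.
have [s sH s_v0] := H_trans x.
by have := no_s s; rewrite sH s_v0 eqxx.
Qed.

Lemma transl_in x : transl x \in H. Proof. by case: (translP x). Qed.

Lemma translE x : transl x v0 = x. Proof. by case: (translP x). Qed.

Lemma translK : {in H, cancel (fun s : {perm T} => s v0) transl}.
Proof.
move=> s sH; apply/esym/eqP; rewrite eq_mulgV1; apply/eqP.
apply: abelian_trans_stab1; first by rewrite groupM ?groupV ?transl_in.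
by rewrite permM -{2}(translE (s v0)) permK.
Qed.

Lemma transl_inj : injective transl.
Proof. by move=> x y eq_xy; rewrite -(translE x) eq_xy translE. Qed.

Lemma big_transl (R : Type) (idx : R) (op : Monoid.com_law idx) (F : {perm T} -> R) :
  \big[op/idx]_(x : T) F (transl x) = \big[op/idx]_(s in H) F s.
Proof.
rewrite (reindex transl) /=; last first.
  by exists (fun s => s v0) => [x _ | s sH]; rewrite ?translE ?translK.
by apply: eq_bigl => x; rewrite transl_in.
Qed.

Lemma card_abelian_trans : #|T| = #|H|.
Proof.
have <- : [set transl x | x : T] = H.
  apply/setP => s; apply/imsetP/idP => [[x _ ->] | sH]; first exact: transl_in.
  by exists (s v0); rewrite ?translK.
by rewrite card_imset //; apply: transl_inj.
Qed.

End RegularAction.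

Lemma sum_cfunM_real (gT : finGroupType) (G : {group gT}) (phi psi : 'CF(G)) :
  {in G, forall x, psi x \is Num.real} ->
  \sum_(x in G) phi x * psi x = #|G|%:R * '[phi, psi].
Proof.
move=> psi_real; rewrite cfdotE mulVKf ?pnatr_eq0 -?lt0n ?cardG_gt0 //.
by apply: eq_bigr => x xG; rewrite conj_Creal ?psi_real.
Qed.

Section AbelianVertexTransitive.

Variables (T : finType) (e : rel T).
Hypothesis e_sym : symmetric e.
Hypothesis e_trans : vertex_transitive e.
Hypothesis aut_abelian : abelian (graph_aut e).
Variable v0 : T.

Local Notation G := (graph_aut_group e).
Local Notation transl := (transl G v0).

Let G_trans : forall x, exists2 s, s \in G & s v0 = x := e_trans v0.
Let transl_G x : transl x \in G := transl_in G_trans x.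
Let transl_v0 x : transl x v0 = x := translE G_trans x.
Let translKG : {in G, cancel (fun s : {perm T} => s v0) transl} :=
  translK G_trans aut_abelian.

(* x |-> (transl x)^-1 v0 is inversion on the Cayley graph; commutativity makes
   it an automorphism, and it fixes v0, so it is the identity. *)
Lemma graph_aut_invg s : s \in G -> s^-1%g = s.
Proof.
pose inv_vertex x := (transl x)^-1%g v0.
have transl_inv x : transl (inv_vertex x) = (transl x)^-1%g.
  by rewrite translKG ?groupV ?transl_G.
have inv_inj : injective inv_vertex.
  move=> x y /(congr1 transl); rewrite !transl_inv.
  by move/invg_inj/(transl_inj G_trans).
pose sigma := perm inv_inj.
have sigma_aut : sigma \in G.
  apply/graph_autP => x y; rewrite !permE /inv_vertex.
  have /graph_autP <- : (transl x * transl y)%g \in G.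
    by rewrite groupM ?transl_G.
  rewrite {2}(centsP aut_abelian (transl x)) ?transl_G //.
  by rewrite !permM !permKV !transl_v0 e_sym.
have sigma1 : sigma = 1%g.
  apply: (abelian_trans_stab1 G_trans) => //.
  have := translKG (group1 G); rewrite perm1 => transl_v0_1.
  by rewrite permE /inv_vertex transl_v0_1 invg1 perm1.
move=> sG; have := congr1 (fun t : {perm T} => t (s v0)) sigma1.
rewrite /= permE perm1 /inv_vertex translKG // => s_inv.
by rewrite -(translKG (groupVr sG)) s_inv translKG.
Qed.

Lemma irr_graph_aut_sign (i : Iirr G) s : s \in G -> 'chi_i s = 1 \/ 'chi_i s = -1.
Proof.
move=> sG; have chi_lin := char_abelianP G aut_abelian i.
have := lin_charX chi_lin 2 sG.
rewrite expgS expg1 -{1}(graph_aut_invg sG) mulVg lin_char1 // => /esym/eqP.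
by rewrite sqrf_eq1 => /orP[] /eqP; [left | right].
Qed.

Lemma irr_graph_aut_real (i : Iirr G) s : 'chi_i s \is Num.real.
Proof.
have [sG | sNG] := boolP (s \in G); last by rewrite cfun0 ?rpred0.
by case: (irr_graph_aut_sign i sG) => ->; rewrite ?rpredN rpred1.
Qed.

Lemma sum_irr_graph_autM (i j : Iirr G) :
  \sum_(s in G) 'chi_i s * 'chi_j s = #|T|%:R * (i == j)%:R.
Proof.
rewrite sum_cfunM_real ?cfdot_irr ?(card_abelian_trans G_trans aut_abelian) //.
by move=> s _; apply: irr_graph_aut_real.
Qed.

Definition irr_eigenvalue (i : Iirr G) : algC :=
  \sum_(s in G) (e v0 (s v0))%:R * 'chi_i s.

Lemma irr_eigenvalue_real i : irr_eigenvalue i \is Num.real.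
Proof.
by apply: rpred_sum => s _; rewrite rpredM ?rpred_nat ?irr_graph_aut_real.
Qed.

Lemma irr_eigenvector (i : Iirr G) x :
  \sum_y (e x y)%:R * 'chi_i (transl y) = irr_eigenvalue i * 'chi_i (transl x).
Proof.
rewrite (eq_bigr (fun y => (e x (transl y v0))%:R * 'chi_i (transl y))); last first.
  by move=> y _; rewrite transl_v0.
rewrite (big_transl G_trans aut_abelian _ (fun s => (e x (s v0))%:R * 'chi_i s)).
have r_G := transl_G x; set r := transl x.
rewrite (reindex (fun s => s * r)%g) /=; last first.
  by exists (fun s => s * r^-1)%g => s _; rewrite ?mulgK ?mulgKV.
rewrite /irr_eigenvalue mulr_suml; apply: eq_big => [s | s]; rewrite groupMr //.
move=> sG.
have chi_lin := char_abelianP G aut_abelian i.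
rewrite lin_charM // mulrA; congr (_ * _ * _).
by rewrite permM -{1}(transl_v0 x) -/r; have /graph_autP -> := r_G.
Qed.

Lemma card_Iirr_graph_aut : #|T| = Nirr G.
Proof.
rewrite (card_abelian_trans G_trans aut_abelian).
by rewrite -(card_Iirr_abelian aut_abelian) card_ord.
Qed.

Local Notation Iirr_of := (cast_ord card_Iirr_graph_aut).

Definition irr_mx : 'M[algC]_#|T| :=
  \matrix_(x, k) 'chi_(Iirr_of k) (transl (enum_val x)).

Lemma adjmx_irr_mx :
  adjmx e *m irr_mx = irr_mx *m diag_mx (\row_k irr_eigenvalue (Iirr_of k)).
Proof.
apply/matrixP => x k; rewrite mul_mx_diag !mxE mulrC -irr_eigenvector.
by rewrite [RHS]big_enum_val /=; apply: eq_bigr => y _; rewrite !mxE.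
Qed.

Lemma irr_mx_unit : irr_mx \in unitmx.
Proof.
have n_neq0 : (#|T|%:R : algC) != 0.
  by rewrite pnatr_eq0 -lt0n; apply/card_gt0P; exists v0.
have irr_mx_orth : irr_mx^T *m irr_mx = (#|T|%:R : algC)%:M.
  apply/matrixP => k l; rewrite !mxE.
  transitivity (\sum_(s in G) 'chi_(Iirr_of k) s * 'chi_(Iirr_of l) s).
    pose chi_kl s := 'chi_(Iirr_of k) s * 'chi_(Iirr_of l) s.
    rewrite -(big_transl G_trans aut_abelian _ chi_kl).
    by rewrite [RHS]big_enum_val; apply: eq_bigr => x _; rewrite !mxE.
  by rewrite sum_irr_graph_autM (inj_eq (@cast_ord_inj _ _ _)) mulr_natr.
have : (#|T|%:R^-1 *: irr_mx^T) *m irr_mx = 1%:M.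
  by rewrite -scalemxAl irr_mx_orth scale_scalar_mx mulVf.
by case/mulmx1_unit.
Qed.

Lemma char_poly_adjmx :
  char_poly (adjmx e) = \prod_(i : Iirr G) ('X - (irr_eigenvalue i)%:P).
Proof.
rewrite (char_poly_diag_similar irr_mx_unit adjmx_irr_mx) (reindex Iirr_of) /=.
  by apply: eq_bigr => k _; rewrite mxE.
by exists (cast_ord (esym card_Iirr_graph_aut)) => k _; rewrite ?cast_ordK ?cast_ordKV.
Qed.

Hypothesis e_irr : irreflexive e.

(* On signs 2 (a + b) <= (1 + a) (1 + b), and by orthogonality the right-hand
   side sums to n over G, the identity contributing 4. *)
Lemma irr_eigenvalue_pair_le (i j : Iirr G) : i != j -> i != 0 -> j != 0 ->
  2 * (irr_eigenvalue i + irr_eigenvalue j) <= #|T|%:R - 4.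
Proof.
move=> neq_ij i_neq0 j_neq0.
have sum_eq_n : \sum_(s in G) (1 + 'chi_i s) * (1 + 'chi_j s) = #|T|%:R.
  rewrite (eq_bigr (fun s => ('chi_0 + 'chi_i) s * ('chi_0 + 'chi_j) s)); last first.
    by move=> s sG; rewrite !cfunE irr0 cfun1E sG.
  rewrite sum_cfunM_real; last by move=> s _; rewrite cfunE rpredD ?irr_graph_aut_real.
  rewrite cfdotDl !cfdotDr !cfdot_irr eqxx !(eq_sym 0) (negbTE neq_ij).
  rewrite (negbTE i_neq0) (negbTE j_neq0) !addr0 mulr1.
  by rewrite (card_abelian_trans G_trans aut_abelian).
have chi1 k : 'chi_k 1%g = 1 :> algC := lin_char1 (char_abelianP G aut_abelian k).
have -> : 2 * (irr_eigenvalue i + irr_eigenvalue j) =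
    \sum_(s in G | s != 1%g) (e v0 (s v0))%:R * (2 * ('chi_i s + 'chi_j s)).
  rewrite -big_split mulr_sumr (bigD1 1%g) //= perm1 e_irr !mul0r addr0 mulr0 add0r.
  by apply: eq_bigr => s _; ring.
have -> : #|T|%:R - 4 = \sum_(s in G | s != 1%g) (1 + 'chi_i s) * (1 + 'chi_j s).
  by rewrite -sum_eq_n (bigD1 1%g) //= !chi1; ring.
apply: ler_sum => s /andP[sG _].
by apply: sign_pair_le; apply: irr_graph_aut_sign.
Qed.

Lemma card_irr_eigenvalue_gt (c : algC) : #|T|%:R - 4 <= 4 * c ->
  (#|[set i | (c < irr_eigenvalue i)%R]| <= 2)%N.
Proof.
move=> n_le; set A := [set i | _]; rewrite -(cardID (pred1 0) A).
rewrite -[2%N]/(1 + 1)%N; apply: leq_add.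
  rewrite -(card1 (0 : Iirr G)); apply: subset_leq_card.
  by apply/subsetP => i /andP[].
rewrite leqNgt; apply/negP => /card_gt1P[i [j []]].
rewrite !inE => /andP[i_neq0 i_A] /andP[j_neq0 j_A] neq_ij.
have := irr_eigenvalue_pair_le neq_ij i_neq0 j_neq0.
have : 4 * c < 2 * (irr_eigenvalue i + irr_eigenvalue j).
  rewrite (_ : 4 * c = 2 * (c + c)); last by ring.
  by rewrite ltr_pM2l ?ltr0n // ltrD.
move=> lt_4c le_n4; have := lt_le_trans lt_4c (le_trans le_n4 n_le).
by rewrite ltxx.
Qed.

End AbelianVertexTransitive.

Theorem corollary3p12 (T : finType) (e : rel T) :
  simple_graph e ->
  (3 <= #|T|)%N ->
  vertex_transitive e ->
  abelian (graph_aut e) ->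
  lambda_k (adjmx e) 3 / (#|T|%:R : algC) <= 1 / 3.
Proof.
move=> [e_sym e_irr] n_ge3 e_trans aut_abelian.
have /card_gt0P[v0 _] : (0 < #|T|)%N by apply: leq_trans n_ge3.
have n_gt0 : (0 : algC) < #|T|%:R by rewrite ltr0n (leq_trans _ n_ge3).
have c_ge0 : (0 : algC) <= 1 / 3 * #|T|%:R by rewrite mulr_ge0 ?divr_ge0 ?ler0n.
rewrite ler_pdivrMr //.
apply: (lambda_k_le (k := 2)) => //.
- rewrite (char_poly_adjmx e_sym e_trans aut_abelian v0).
  by rewrite -(big_map _ xpredT (fun x => 'X - x%:P)).
- apply/allP => _ /mapP[i _ ->].
  exact: (irr_eigenvalue_real e_sym e_trans aut_abelian).
rewrite count_map -sum1_count sum1dep_card.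
apply: (card_irr_eigenvalue_gt e_sym e_trans aut_abelian v0 e_irr).
have -> : 4 * (1 / 3 * #|T|%:R) = #|T|%:R + 1 / 3 * #|T|%:R :> algC by field.
by rewrite lerD2l (le_trans _ c_ge0) // oppr_le0 ler0n.
Qed.
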